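(* Let $\mathbb X,\mathbb Y$ be Euclidean spaces, $\Phi\colon\mathbb X\rightrightarrows\mathbb Y$ with closed graph, $(\bar x,\bar y)\in\operatorname{gph}\Phi$, $u\in\mathbb S_{\mathbb X}$ and $\gamma>1$. Assume $A^\gamma(u)$ holds, i.e., $\ker D^*_\gamma\Phi((\bar x,\bar y);(u,0))\subset\{0\}$ and for all $\alpha,\beta\ge0$ $$\widetilde D^*_\gamma\Phi((\bar x,\bar y);(u,0))(0)\cup\bigcup_{w\in\mathbb S_{\mathbb Y}}D^*_\gamma\Phi((\bar x,\bar y);(u,\alpha w))(\beta w)\subset\operatorname{Im}D^*\Phi(\bar x,\bar y).$$ Then $\Phi$ is asymptotically regular at $(\bar x,\bar y)$ in direction $u$.
   Context: Pseudo-coderivative of order $\gamma$ ($u\in\mathbb S_{\mathbb X}$, $v\in\mathbb Y$): $x^*\in D^*_\gamma\Phi((\bar x,\bar y);(u,v))(y^* )$ iff there are $u_k\to u$, $v_k\to v$, $t_k\downarrow0$, $x_k^*\to x^*$, $y_k^*\to y^*$ with $(x_k^*,-y_k^*/(t_k\|u_k\|)^{\gamma-1})\in\widehat{\mathcal N}_{\operatorname{gph}\Phi}(\bar x+t_ku_k,\bar y+(t_k\|u_k\|)^\gamma v_k)$ for all $k$; Gfrerer's pseudo-coderivative $\widetilde D^*_\gamma$ uses instead the point $(\bar x+t_ku_k,\bar y+t_kv_k)$. $\ker\Psi=\{y^*\mid0\in\Psi(y^* )\}$. $D^*\Phi(x,y)(y^* )=\{x^*\mid(x^*,-y^* )\in\mathcal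 N_{\operatorname{gph}\Phi}(x,y)\}$, $\widehat D^*$ the same with the regular normal cone $\widehat{\mathcal N}$, $\operatorname{Im}D^*\Phi(\bar x,\bar y)=\bigcup_{y^*}D^*\Phi(\bar x,\bar y)(y^* )$. Asymptotic regularity in direction $u$: for all $(x_k,y_k)\in\operatorname{gph}\Phi$, $x_k^*$, $\lambda_k$, $x^*$, $y^*$ with $x_k\notin\Phi^{-1}(\bar y)$, $y_k\ne\bar y$, $x_k^*\in\widehat D^*\Phi(x_k,y_k)(\lambda_k)$ for all $k$ and $x_k\to\bar x$, $y_k\to\bar y$, $x_k^*\to x^*$, $\frac{x_k-\bar x}{\|x_k-\bar x\|}\to u$, $\frac{y_k-\bar y}{\|x_k-\bar x\|}\to0$, $\frac{\|y_k-\bar y\|}{\|x_k-\bar x\|}\lambda_k\to y^*$, $\|\lambda_k\|\to\infty$, $\frac{y_k-\bar y}{\|y_k-\bar y\|}-\frac{\lambda_k}{\|\lambda_k\|}\to0$, one has $x^*\in\operatorname{Im}D^*\Phi(\bar x,\bar y)$. *)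

From mathcomp Require Import all_boot all_order all_algebra.
From mathcomp Require Import all_classical all_reals exp.
Set Implicit Arguments. Unset Strict Implicit. Unset Printing Implicit Defensive.
Import Order.TTheory GRing.Theory Num.Theory.
Local Open Scope ring_scope.
Local Open Scope classical_set_scope.

Section Defs.
Variable R : realType.

Definition dotv n (u v : 'rV[R]_n) : R := \sum_(i < n) u 0 i * v 0 i.
Definition enorm n (u : 'rV[R]_n) : R := Num.sqrt (dotv u u).
Definition pnorm n m (a : 'rV[R]_n) (b : 'rV[R]_m) : R :=
  Num.sqrt (dotv a a + dotv b b).

Definition vcvg n (x : nat -> 'rV[R]_n) (l : 'rV[R]_n) : Prop :=
  forall e : R, 0 < e -> exists N : nat, forall k, (N <= k)%N -> enorm (x k - l) < e.
Definition rcvg (t : nat -> R) (l : R) : Prop :=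
  forall e : R, 0 < e -> exists N : nat, forall k, (N <= k)%N -> `|t k - l| < e.
Definition rdiv_pinfty (t : nat -> R) : Prop :=
  forall M : R, exists N : nat, forall k, (N <= k)%N -> M < t k.

(* set-valued map Phi : X ==> Y, gph Phi = [set (x,y) | Phi x y] *)
Definition closed_graph n m (Phi : 'rV[R]_n -> set 'rV[R]_m) : Prop :=
  forall (xk : nat -> 'rV[R]_n) (yk : nat -> 'rV[R]_m) x y,
    (forall k, Phi (xk k) (yk k)) -> vcvg xk x -> vcvg yk y -> Phi x y.

Definition reg_normal n m (Phi : 'rV[R]_n -> set 'rV[R]_m) x y xs ys : Prop :=
  Phi x y /\
  forall e : R, 0 < e -> exists d : R, 0 < d /\
    forall x' y', Phi x' y' -> pnorm (x' - x) (y' - y) < d ->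
      dotv xs (x' - x) + dotv ys (y' - y) <= e * pnorm (x' - x) (y' - y).

Definition lim_normal n m (Phi : 'rV[R]_n -> set 'rV[R]_m) x y xs ys : Prop :=
  exists (xk : nat -> 'rV[R]_n) (yk : nat -> 'rV[R]_m)
         (xsk : nat -> 'rV[R]_n) (ysk : nat -> 'rV[R]_m),
    (forall k, reg_normal Phi (xk k) (yk k) (xsk k) (ysk k)) /\
    vcvg xk x /\ vcvg yk y /\ vcvg xsk xs /\ vcvg ysk ys.

Definition coderiv n m (Phi : 'rV[R]_n -> set 'rV[R]_m) x y (ys : 'rV[R]_m)
  : set 'rV[R]_n := [set xs | lim_normal Phi x y xs (- ys)].
Definition reg_coderiv n m (Phi : 'rV[R]_n -> set 'rV[R]_m) x y (ys : 'rV[R]_m)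
  : set 'rV[R]_n := [set xs | reg_normal Phi x y xs (- ys)].
Definition Im_coderiv n m (Phi : 'rV[R]_n -> set 'rV[R]_m) x y : set 'rV[R]_n :=
  [set xs | exists ys, coderiv Phi x y ys xs].

Definition ker n m (Psi : 'rV[R]_m -> set 'rV[R]_n) : set 'rV[R]_m :=
  [set ys | Psi ys 0].

Definition pcoderiv (gamma : R) n m (Phi : 'rV[R]_n -> set 'rV[R]_m)
  (xb : 'rV[R]_n) (yb : 'rV[R]_m) (u : 'rV[R]_n) (v : 'rV[R]_m)
  (ys : 'rV[R]_m) : set 'rV[R]_n :=
  [set xs | exists (uk : nat -> 'rV[R]_n) (vk : nat -> 'rV[R]_m) (tk : nat -> R)
      (xsk : nat -> 'rV[R]_n) (ysk : nat -> 'rV[R]_m),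
    vcvg uk u /\ vcvg vk v /\ (forall k, 0 < tk k) /\ rcvg tk 0 /\
    vcvg xsk xs /\ vcvg ysk ys /\
    forall k, reg_normal Phi (xb + tk k *: uk k)
      (yb + ((tk k * enorm (uk k)) `^ gamma) *: vk k)
      (xsk k) (- (((tk k * enorm (uk k)) `^ (gamma - 1))^-1 *: ysk k))].

Definition gpcoderiv (gamma : R) n m (Phi : 'rV[R]_n -> set 'rV[R]_m)
  (xb : 'rV[R]_n) (yb : 'rV[R]_m) (u : 'rV[R]_n) (v : 'rV[R]_m)
  (ys : 'rV[R]_m) : set 'rV[R]_n :=
  [set xs | exists (uk : nat -> 'rV[R]_n) (vk : nat -> 'rV[R]_m) (tk : nat -> R)
      (xsk : nat -> 'rV[R]_n) (ysk : nat -> 'rV[R]_m),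
    vcvg uk u /\ vcvg vk v /\ (forall k, 0 < tk k) /\ rcvg tk 0 /\
    vcvg xsk xs /\ vcvg ysk ys /\
    forall k, reg_normal Phi (xb + tk k *: uk k) (yb + tk k *: vk k)
      (xsk k) (- (((tk k * enorm (uk k)) `^ (gamma - 1))^-1 *: ysk k))].

Definition asymp_regular n m (Phi : 'rV[R]_n -> set 'rV[R]_m)
  (xb : 'rV[R]_n) (yb : 'rV[R]_m) (u : 'rV[R]_n) : Prop :=
  forall (xk : nat -> 'rV[R]_n) (yk : nat -> 'rV[R]_m) (xsk : nat -> 'rV[R]_n)
         (lk : nat -> 'rV[R]_m) (xs : 'rV[R]_n) (ys : 'rV[R]_m),
    (forall k, Phi (xk k) (yk k)) ->
    (forall k, ~ Phi (xk k) yb) ->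
    (forall k, yk k <> yb) ->
    (forall k, reg_coderiv Phi (xk k) (yk k) (lk k) (xsk k)) ->
    vcvg xk xb -> vcvg yk yb -> vcvg xsk xs ->
    vcvg (fun k => (enorm (xk k - xb))^-1 *: (xk k - xb)) u ->
    vcvg (fun k => (enorm (xk k - xb))^-1 *: (yk k - yb)) 0 ->
    vcvg (fun k => (enorm (yk k - yb) / enorm (xk k - xb)) *: lk k) ys ->
    rdiv_pinfty (fun k => enorm (lk k)) ->
    vcvg (fun k => (enorm (yk k - yb))^-1 *: (yk k - yb)
                   - (enorm (lk k))^-1 *: lk k) 0 ->
    Im_coderiv Phi xb yb xs.

End Defs.

(* Write x_k = xb + t_k d_k and y_k = yb + tau_k w_k with unit directions d_k, w_k,
   and put r_k = tau_k / t_k^gamma and s_k = t_k^(gamma-1) |lambda_k|.  Rescaling the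
   regular normal (x*_k, -lambda_k) at (x_k, y_k) exhibits it as a normal of the form
   used in D*_gamma Phi((xb, yb); (u, v)), with v_k = r_k w_k and y*_k = s_k lambda_k /
   |lambda_k|.  As r_k s_k = (tau_k / t_k) |lambda_k| -> |y*|, after passing to a
   subsequence one of three things happens.  If s_k -> oo, then r_k -> 0 and dividing
   the normal by s_k makes lim w_k a unit vector of ker D*_gamma Phi((xb, yb); (u, 0)),
   which is excluded.  If r_k -> oo, then s_k -> 0 and x* lies in the Gfrerer
   pseudo-coderivative at (u, 0) of 0.  Otherwise r_k -> alpha, s_k -> beta and x* lies
   in D*_gamma Phi((xb, yb); (u, alpha w))(beta w).  In the last two cases A^gamma(u)
   puts x* in Im D*Phi(xb, yb). *)

From mathcomp Require Import all_boot all_order all_algebra.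
From mathcomp Require Import all_classical all_reals exp.
From mathcomp Require Import topology normedtype sequences realfun.
From mathcomp Require Import ring lra.
Import Order.TTheory GRing.Theory Num.Theory numFieldNormedType.Exports.
Set Implicit Arguments. Unset Strict Implicit. Unset Printing Implicit Defensive.
Local Open Scope ring_scope.
Local Open Scope classical_set_scope.

Lemma rcvgE (R : realType) (t : nat -> R) l : rcvg t l <-> t @ \oo --> l.
Proof.
split=> [tl | /cvgrPdist_lt tl].
  apply/cvgrPdist_lt => e e0; have [N tN] := tl e e0; exists N => // k /= Nk.
  by rewrite distrC; apply: tN.
by move=> e e0; have [N _ tN] := tl e e0; exists N => k Nk; rewrite distrC; apply: tN.
Qed.

Section euclidean_norm.
Variables (R : realType) (n : nat).
Implicit Types (u v : 'rV[R]_n).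

Lemma dotvZl c u v : dotv (c *: u) v = c * dotv u v.
Proof. by rewrite /dotv mulr_sumr; apply: eq_bigr => i _; rewrite mxE mulrA. Qed.

Lemma dotvv_ge0 v : 0 <= dotv v v.
Proof. by apply: sumr_ge0 => i _; rewrite -expr2 sqr_ge0. Qed.

Lemma enorm_ge0 v : 0 <= enorm v.
Proof. exact: sqrtr_ge0. Qed.

Lemma enormZ c v : enorm (c *: v) = `|c| * enorm v.
Proof.
rewrite /enorm dotvZl /dotv -sqrtr_sqr -sqrtrM ?sqr_ge0 //.
congr Num.sqrt; rewrite expr2 -mulrA; congr (_ * _).
by rewrite mulr_sumr; apply: eq_bigr => i _; rewrite mxE mulrCA.
Qed.

Lemma coord_le_enorm v i : `|v 0 i| <= enorm v.
Proof.
rewrite /enorm -sqrtr_sqr ler_sqrt ?dotvv_ge0 // /dotv (bigD1 i) //= expr2 lerDl.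
by apply: sumr_ge0 => j _; rewrite -expr2 sqr_ge0.
Qed.

Lemma mx_norm_le_enorm v : `|v| <= enorm v.
Proof.
rewrite [`|v|]mx_normrE; apply: bigmax_le => [|[i j] _]; first exact: enorm_ge0.
by rewrite [i]ord1; apply: coord_le_enorm.
Qed.

Lemma enorm_le_mx_norm v : enorm v <= n.+1%:R * `|v|.
Proof.
have coord_le i : `|v 0 i| ^+ 2 <= `|v| ^+ 2.
  by rewrite lerXn2r ?nnegrE // [`|v|]mx_normrE; apply: (le_bigmax _ _ (ord0, i)).
rewrite -[_ * _]ger0_norm ?mulr_ge0 // -sqrtr_sqr ler_sqrt ?sqr_ge0 //.
apply: (@le_trans _ _ (\sum_(i < n) `|v| ^+ 2)).
  by apply: ler_sum => i _; rewrite -expr2 -real_normK ?num_real.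
rewrite sumr_const card_ord -[_ *+ n]mulr_natl exprMn ler_wpM2r ?sqr_ge0 //.
by rewrite -natrX ler_nat (leq_trans (leqnSn n)) // leq_pmulr.
Qed.

Lemma enorm_eq0 v : (enorm v == 0) = (v == 0).
Proof.
apply/eqP/eqP => [v0|->]; last first.
  by rewrite /enorm /dotv big1 ?sqrtr0 // => i _; rewrite mxE mulr0.
apply: (@mx_norm_eq0 R); apply/eqP.
by rewrite -[mx_norm v]/`|v| eq_le normr_ge0 -v0 mx_norm_le_enorm.
Qed.

Lemma enorm0 : enorm (0 : 'rV[R]_n) = 0.
Proof. by apply/eqP; rewrite enorm_eq0. Qed.

Lemma enorm_gt0 v : v != 0 -> 0 < enorm v.
Proof. by move=> v0; rewrite lt_def enorm_eq0 v0 enorm_ge0. Qed.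

Lemma enorm_normalize v : v != 0 -> enorm ((enorm v)^-1 *: v) = 1.
Proof.
move=> v0; rewrite enormZ ger0_norm ?invr_ge0 ?enorm_ge0 // mulVf //.
by rewrite enorm_eq0.
Qed.

Lemma vcvgE (x : nat -> 'rV[R]_n) (l : 'rV[R]_n) : vcvg x l <-> x @ \oo --> l.
Proof.
split=> [xl | /cvgrPdist_lt xl].
  apply/cvgrPdist_lt => e e0; have [N xN] := xl e e0; exists N => // k /= Nk.
  by rewrite -normrN opprB; apply: le_lt_trans (mx_norm_le_enorm _) (xN k Nk).
move=> e e0; have [N _ xN] := xl (e / n.+1%:R) (divr_gt0 e0 (ltr0Sn _ _)).
exists N => k Nk; apply: le_lt_trans (enorm_le_mx_norm _) _.
by rewrite mulrC -ltr_pdivlMr ?ltr0Sn // -normrN opprB; apply: xN.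
Qed.

Lemma cvg_enorm (x : nat -> 'rV[R]_n) (l : 'rV[R]_n) :
  x @ \oo --> l -> enorm (x k) @[k --> \oo] --> enorm l.
Proof.
move=> xl; apply: (continuous_cvg _ (@sqrt_continuous R _)).
apply: cvg_big => [|i _]; first exact: add_continuous.
by apply: cvgM; exact: continuous_cvg _ (@coord_continuous R 1 n 0 i l) xl.
Qed.

End euclidean_norm.

Section subsequences.
Variable R : realType.

Lemma increasing_seq_cvgn (f : nat -> nat) : increasing_seq f -> f @ \oo --> \oo.
Proof.
move=> f_incr; have f_ge k : (k <= f k)%N.
  by elim: k => // k ih; apply: leq_ltn_trans ih ((increasing_seqP _).2 f_incr k).
by apply/cvgnyPge => N; exists N => // k /= Nk; apply: leq_trans Nk (f_ge k).
Qed.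

Lemma cvg_subseq {T : topologicalType} (u : nat -> T) (f : nat -> nat) (l : T) :
  increasing_seq f -> u @ \oo --> l -> u \o f @ \oo --> l.
Proof. by move=> /increasing_seq_cvgn; apply: cvg_comp. Qed.

Lemma increasing_seq_comp (f g : nat -> nat) :
  increasing_seq f -> increasing_seq g -> increasing_seq (f \o g).
Proof. by move=> f_incr g_incr a b; rewrite /= !(f_incr, g_incr). Qed.

Lemma cvg_rV_coordP n (x : nat -> 'rV[R]_n) (l : 'rV[R]_n) :
  x @ \oo --> l <-> forall i, (fun k => x k 0 i) @ \oo --> l 0 i.
Proof.
split=> [xl i | xl]; first exact: continuous_cvg _ (@coord_continuous R 1 n 0 i l) xl.
apply/cvgrPdist_lt => e e0.
have /filter_forall : forall i, \forall k \near \oo, `|l 0 i - x k 0 i| < e.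
  by move=> i; apply: cvgr_dist_lt (xl i) _ e0.
apply: filterS => k xk; rewrite [`|_|]mx_normrE; apply: bigmax_lt => // -[i j] _.
by rewrite [i]ord1 !mxE; apply: xk.
Qed.

Lemma rV_bolzano_weierstrass n (x : nat -> 'rV[R]_n) M :
  (forall k, enorm (x k) <= M) -> exists2 f, increasing_seq f & cvgn (x \o f).
Proof.
move=> xM.
suff /(_ n (leqnn n))[f f_incr fx] : forall j, (j <= n)%N -> exists2 f,
    increasing_seq f & forall i : 'I_n, (i < j)%N -> cvgn (fun k => x (f k) 0 i).
  exists f => //; apply/cvg_ex; exists (\row_i lim ((fun k => x (f k) 0 i) @ \oo)).
  by apply/cvg_rV_coordP => i; rewrite mxE; apply: fx.
elim=> [_|j ih lt_jn]; first by exists id.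
have [f f_incr fx] := ih (ltnW lt_jn).
have : bounded_fun (fun k => x (f k) 0 (Ordinal lt_jn)).
  exists M; split; first exact: num_real.
  move=> N MN k _ /=; rewrite (le_trans (coord_le_enorm _ _)) //.
  exact: le_trans (xM _) (ltW MN).
move=> /bolzano_weierstrass[g g_incr gx].
exists (f \o g) => [|i]; first exact: increasing_seq_comp.
rewrite ltnS leq_eqVlt => /orP[/eqP ij | ij].
  by rewrite (_ : i = Ordinal lt_jn) //; apply: val_inj.
apply/cvg_ex; exists (lim ((fun k => x (f k) 0 i) @ \oo)).
exact: cvg_subseq (fx i ij).
Qed.

Lemma subseq_cvg_or_inv_cvg0 (a : nat -> R) : (forall k, 0 <= a k) ->
  exists2 f, increasing_seq f &
    (exists2 l : R, 0 <= l & a \o f @ \oo --> l) \/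
    ((forall k, 0 < a (f k)) /\ (fun k => (a (f k))^-1) @ \oo --> 0).
Proof.
(* b = a / (1 + a) maps [0, +oo] into [0, 1], where Bolzano-Weierstrass applies. *)
move=> a_ge0; pose b k := a k / (1 + a k).
have a1_gt0 k : 0 < 1 + a k by have := a_ge0 k; lra.
have b_ge0 k : 0 <= b k by rewrite divr_ge0 // ltW.
have b_lt1 k : b k < 1 by rewrite ltr_pdivrMr // mul1r; have := a_ge0 k; lra.
have a_b k : a k = b k / (1 - b k).
  by rewrite /b; field; rewrite (gt_eqF (a1_gt0 k)) addrK oner_neq0.
have : bounded_fun b.
  exists 1; split; first exact: num_real.
  by move=> N N1 k _ /=; rewrite ger0_norm // ltW // (lt_trans (b_lt1 k)).
move=> /bolzano_weierstrass[g g_incr /cvg_ex[rho brho]].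
have rho_ge0 : 0 <= rho by apply: (cvgr_to_ge brho); apply: nearW => k; apply: b_ge0.
have rho_le1 : rho <= 1 by apply: (cvgr_to_le brho); apply: nearW => k; apply/ltW/b_lt1.
have [rho1 | rho_neq1] := eqVneq rho 1.
  rewrite {}rho1 in brho; have [N _ bN] := cvgr_gt _ brho _ ltr01.
  exists (g \o addn^~ N).
    by apply: increasing_seq_comp => // p q; apply: leq_add2r.
  right; split => [k|].
    by rewrite a_b divr_gt0 ?subr_gt0 //; apply: bN; exact: leq_addl.
  suff : (fun k => (a (g k))^-1) @ \oo --> 0 by apply: cvg_comp (cvg_addnr N).
  have -> : (fun k => (a (g k))^-1) = fun k => (1 - b (g k)) / b (g k).
    by apply/funext => k; rewrite a_b invf_div.
  rewrite -(mul0r (1 : R)^-1) -(subrr (1 : R)).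
  by apply: cvgM; [apply: cvgB (cvg_cst _) brho | apply: cvgV (oner_neq0 _) brho].
exists g => //; left; exists (rho / (1 - rho)); first by rewrite divr_ge0 // subr_ge0.
have -> : a \o g = fun k => b (g k) / (1 - b (g k)) by apply/funext => k; apply: a_b.
by apply: cvgM brho (cvgV _ (cvgB (cvg_cst _) brho)); rewrite subr_eq0 eq_sym.
Qed.

End subsequences.

Section pseudo_coderivative_sequences.
Variables (R : realType) (n m : nat) (Phi : 'rV[R]_n -> set 'rV[R]_m).
Variables (xb : 'rV[R]_n) (yb : 'rV[R]_m) (gamma : R).

Lemma reg_normalZ x y xs ys c :
  0 < c -> reg_normal Phi x y xs ys -> reg_normal Phi x y (c *: xs) (c *: ys).
Proof.
move=> c_gt0 [Pxy xys]; split => // e e_gt0.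
have [d [d_gt0 xysd]] := xys (e / c) (divr_gt0 e_gt0 c_gt0).
exists d; split => // x' y' Px'y' near_xy; rewrite !dotvZl -mulrDr.
have -> : e * pnorm (x' - x) (y' - y) = c * (e / c * pnorm (x' - x) (y' - y)).
  by field; rewrite gt_eqF.
by rewrite ler_pM2l // xysd.
Qed.

Lemma reg_coderiv_rescale x y xs ys c t :
  0 < c -> 0 < t -> reg_coderiv Phi x y ys xs ->
  reg_normal Phi x y (c *: xs)
    (- ((t `^ (gamma - 1))^-1 *: ((c * t `^ (gamma - 1)) *: ys))).
Proof.
move=> c_gt0 t_gt0 /(reg_normalZ c_gt0).
by rewrite scalerA mulrCA mulVf ?mulr1 ?scalerN // gt_eqF // powR_gt0.
Qed.

Variables (x : nat -> 'rV[R]_n) (y : nat -> 'rV[R]_m).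
Variables (xsk : nat -> 'rV[R]_n) (ysk : nat -> 'rV[R]_m).
Hypotheses (x_neq : forall k, x k != xb)
  (normal : forall k, reg_coderiv Phi (x k) (y k) (ysk k) (xsk k))
  (x_cvg : x @ \oo --> xb).

Let t k := enorm (x k - xb).
Let d k := (t k)^-1 *: (x k - xb).

Let t_gt0 k : 0 < t k.
Proof. by rewrite enorm_gt0 // subr_eq0. Qed.

Let d_unit k : enorm (d k) = 1.
Proof. by rewrite enorm_normalize // subr_eq0. Qed.

Let x_eq k : xb + t k *: d k = x k.
Proof. by rewrite scalerA mulfV ?gt_eqF // scale1r addrC subrK. Qed.

Let t_cvg0 : rcvg t 0.
Proof.
apply/rcvgE; rewrite -(enorm0 R n); apply: cvg_enorm.
by rewrite -(subrr xb); apply: cvgB x_cvg (cvg_cst _).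
Qed.

Lemma pcoderiv_of_seq (c : nat -> R) u v xs ys :
  (forall k, 0 < c k) ->
  (fun k => (enorm (x k - xb))^-1 *: (x k - xb)) @ \oo --> u ->
  (fun k => (enorm (x k - xb) `^ gamma)^-1 *: (y k - yb)) @ \oo --> v ->
  (fun k => c k *: xsk k) @ \oo --> xs ->
  (fun k => (c k * enorm (x k - xb) `^ (gamma - 1)) *: ysk k) @ \oo --> ys ->
  pcoderiv gamma Phi xb yb u v ys xs.
Proof.
move=> c_gt0 /vcvgE d_cvg /vcvgE v_cvg /vcvgE xs_cvg /vcvgE ys_cvg.
exists d, (fun k => (t k `^ gamma)^-1 *: (y k - yb)), t,
  (fun k => c k *: xsk k), (fun k => (c k * t k `^ (gamma - 1)) *: ysk k).
do 6 (split => //); move=> k; rewrite d_unit mulr1 x_eq scalerA mulfV; last first.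
  by rewrite gt_eqF // powR_gt0.
by rewrite scale1r addrC subrK; apply: reg_coderiv_rescale.
Qed.

Lemma gpcoderiv_of_seq (c : nat -> R) u v xs ys :
  (forall k, 0 < c k) ->
  (fun k => (enorm (x k - xb))^-1 *: (x k - xb)) @ \oo --> u ->
  (fun k => (enorm (x k - xb))^-1 *: (y k - yb)) @ \oo --> v ->
  (fun k => c k *: xsk k) @ \oo --> xs ->
  (fun k => (c k * enorm (x k - xb) `^ (gamma - 1)) *: ysk k) @ \oo --> ys ->
  gpcoderiv gamma Phi xb yb u v ys xs.
Proof.
move=> c_gt0 /vcvgE d_cvg /vcvgE v_cvg /vcvgE xs_cvg /vcvgE ys_cvg.
exists d, (fun k => (t k)^-1 *: (y k - yb)), t,
  (fun k => c k *: xsk k), (fun k => (c k * t k `^ (gamma - 1)) *: ysk k).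
do 6 (split => //); move=> k; rewrite d_unit mulr1 x_eq scalerA mulfV ?gt_eqF //.
by rewrite scale1r addrC subrK; apply: reg_coderiv_rescale.
Qed.

End pseudo_coderivative_sequences.

Section asymptotic_regularity.
Variables (R : realType) (n m : nat) (Phi : 'rV[R]_n -> set 'rV[R]_m).
Variables (xb : 'rV[R]_n) (yb : 'rV[R]_m) (u : 'rV[R]_n) (gamma : R).
Variables (x : nat -> 'rV[R]_n) (y : nat -> 'rV[R]_m).
Variables (xsk : nat -> 'rV[R]_n) (lk : nat -> 'rV[R]_m) (xs : 'rV[R]_n) (ys : 'rV[R]_m).
Hypotheses (x_neq : forall k, x k != xb) (y_neq : forall k, y k != yb)
  (normal : forall k, reg_coderiv Phi (x k) (y k) (lk k) (xsk k))
  (x_cvg : x @ \oo --> xb) (xs_cvg : xsk @ \oo --> xs)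
  (d_cvg : (fun k => (enorm (x k - xb))^-1 *: (x k - xb)) @ \oo --> u)
  (v0_cvg : (fun k => (enorm (x k - xb))^-1 *: (y k - yb)) @ \oo --> (0 : 'rV[R]_m))
  (ys_cvg : (fun k => (enorm (y k - yb) / enorm (x k - xb)) *: lk k) @ \oo --> ys)
  (dir_cvg : (fun k => (enorm (y k - yb))^-1 *: (y k - yb)
                       - (enorm (lk k))^-1 *: lk k) @ \oo --> (0 : 'rV[R]_m)).

Let t k := enorm (x k - xb).
Let tau k := enorm (y k - yb).
Let w k := (tau k)^-1 *: (y k - yb).
Let l k := (enorm (lk k))^-1 *: lk k.
Let r k := tau k / t k `^ gamma.
Let s k := t k `^ (gamma - 1) * enorm (lk k).

Let t_gt0 k : 0 < t k.
Proof. by rewrite enorm_gt0 // subr_eq0. Qed.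

Let w_unit k : enorm (w k) = 1.
Proof. by rewrite enorm_normalize // subr_eq0. Qed.

Let r_gt0 k : 0 < r k.
Proof. by rewrite divr_gt0 ?powR_gt0 // enorm_gt0 // subr_eq0. Qed.

Let s_ge0 k : 0 <= s k.
Proof. by rewrite mulr_ge0 ?powR_ge0 ?enorm_ge0. Qed.

Let y_scaled k : (t k `^ gamma)^-1 *: (y k - yb) = r k *: w k.
Proof.
rewrite scalerA mulrAC mulfV ?mul1r // gt_eqF //.
by rewrite enorm_gt0 // subr_eq0.
Qed.

Let lk_scaled (c : R) k : (c * t k `^ (gamma - 1)) *: lk k = c *: (s k *: l k).
Proof.
rewrite /s /l; have [->|lk_neq0] := eqVneq (lk k) 0; first by rewrite !scaler0.
by rewrite !scalerA -mulrA mulfK // enorm_eq0.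
Qed.

Let rs_cvg : (fun k => r k * s k) @ \oo --> enorm ys.
Proof.
suff -> : (fun k => r k * s k) = fun k => enorm ((tau k / t k) *: lk k).
  exact: cvg_enorm ys_cvg.
apply/funext => k; rewrite enormZ ger0_norm ?divr_ge0 ?enorm_ge0 //.
have t_pow : t k `^ gamma = t k `^ (gamma - 1) * t k.
  rewrite -{3}(powRr1 (ltW (t_gt0 k))) -powRD ?subrK //.
  by apply/implyP => _; rewrite gt_eqF.
rewrite /r /s t_pow; field.
by rewrite !gt_eqF ?t_gt0 ?powR_gt0.
Qed.

Let l_cvg phi (w0 : 'rV[R]_m) :
  increasing_seq phi -> w \o phi @ \oo --> w0 -> l \o phi @ \oo --> w0.
Proof.
move=> phi_incr w_cvg; rewrite -[w0]subr0.
have -> : l \o phi = fun k => w (phi k) - (w (phi k) - l (phi k)).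
  by apply/funext => k; rewrite subKr.
by apply: cvgB w_cvg (cvg_subseq phi_incr dir_cvg).
Qed.

Lemma subseq_ker_pcoderiv phi (w0 : 'rV[R]_m) :
  increasing_seq phi -> w \o phi @ \oo --> w0 ->
  (forall k, 0 < s (phi k)) -> (fun k => (s (phi k))^-1) @ \oo --> 0 ->
  ker (pcoderiv gamma Phi xb yb u 0) w0.
Proof.
move=> phi_incr w_cvg s_gt0 s_inv_cvg.
have r_cvg : r \o phi @ \oo --> 0.
  have -> : r \o phi = fun k => r (phi k) * s (phi k) * (s (phi k))^-1.
    by apply/funext => k; rewrite mulfK // gt_eqF.
  by rewrite -(mulr0 (enorm ys)); apply: cvgM (cvg_subseq phi_incr rs_cvg) s_inv_cvg.
apply: (pcoderiv_of_seq (fun k => x_neq (phi k)) (fun k => normal (phi k))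
  (cvg_subseq phi_incr x_cvg) (c := fun k => (s (phi k))^-1)).
- by move=> k; rewrite invr_gt0.
- exact: cvg_subseq phi_incr d_cvg.
- rewrite (eq_cvg _ _ (fun k => y_scaled (phi k))) -(scale0r w0).
  exact: cvgZ r_cvg w_cvg.
- rewrite -(scale0r xs); exact: cvgZ s_inv_cvg (cvg_subseq phi_incr xs_cvg).
- suff scaled_l k :
      ((s (phi k))^-1 * t (phi k) `^ (gamma - 1)) *: lk (phi k) = l (phi k).
    by rewrite (eq_cvg _ _ scaled_l); apply: l_cvg w_cvg.
  by rewrite lk_scaled scalerA mulVf ?scale1r // gt_eqF.
Qed.

Lemma subseq_gpcoderiv phi (w0 : 'rV[R]_m) :
  increasing_seq phi -> w \o phi @ \oo --> w0 ->
  (fun k => (r (phi k))^-1) @ \oo --> 0 -> gpcoderiv gamma Phi xb yb u 0 0 xs.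
Proof.
move=> phi_incr w_cvg r_inv_cvg.
have s_cvg : s \o phi @ \oo --> 0.
  have -> : s \o phi = fun k => r (phi k) * s (phi k) * (r (phi k))^-1.
    by apply/funext => k; rewrite mulrAC mulfV ?mul1r // gt_eqF.
  by rewrite -(mulr0 (enorm ys)); apply: cvgM (cvg_subseq phi_incr rs_cvg) r_inv_cvg.
apply: (gpcoderiv_of_seq (fun k => x_neq (phi k)) (fun k => normal (phi k))
  (cvg_subseq phi_incr x_cvg) (c := fun=> 1)) => //.
- exact: cvg_subseq phi_incr d_cvg.
- exact: cvg_subseq phi_incr v0_cvg.
- by rewrite (eq_cvg _ _ (fun k => scale1r (xsk (phi k)))); apply: cvg_subseq xs_cvg.
- rewrite (eq_cvg _ _ (fun k => lk_scaled 1 (phi k))) -(scale0r w0).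
  by under eq_cvg do rewrite scale1r; apply: cvgZ s_cvg (l_cvg phi_incr w_cvg).
Qed.

Lemma subseq_pcoderiv phi (w0 : 'rV[R]_m) (alpha beta : R) :
  increasing_seq phi -> w \o phi @ \oo --> w0 ->
  r \o phi @ \oo --> alpha -> s \o phi @ \oo --> beta ->
  pcoderiv gamma Phi xb yb u (alpha *: w0) (beta *: w0) xs.
Proof.
move=> phi_incr w_cvg r_cvg s_cvg.
apply: (pcoderiv_of_seq (fun k => x_neq (phi k)) (fun k => normal (phi k))
  (cvg_subseq phi_incr x_cvg) (c := fun=> 1)) => //.
- exact: cvg_subseq phi_incr d_cvg.
- by rewrite (eq_cvg _ _ (fun k => y_scaled (phi k))); apply: cvgZ r_cvg w_cvg.
- by rewrite (eq_cvg _ _ (fun k => scale1r (xsk (phi k)))); apply: cvg_subseq xs_cvg.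
- rewrite (eq_cvg _ _ (fun k => lk_scaled 1 (phi k))).
  by under eq_cvg do rewrite scale1r; apply: cvgZ s_cvg (l_cvg phi_incr w_cvg).
Qed.

Lemma pseudo_coderiv_trichotomy :
  (exists2 w0, enorm w0 = 1 & ker (pcoderiv gamma Phi xb yb u 0) w0) \/
  gpcoderiv gamma Phi xb yb u 0 0 xs \/
  exists alpha beta w0, [/\ 0 <= alpha, 0 <= beta, enorm w0 = 1
    & pcoderiv gamma Phi xb yb u (alpha *: w0) (beta *: w0) xs].
Proof.
have w_le1 k : enorm (w k) <= 1 by rewrite w_unit.
have [phi1 phi1_incr /cvg_ex[w0 w_cvg]] := rV_bolzano_weierstrass w_le1.
have w0_unit : enorm w0 = 1.
  apply: (cvg_unique (@norm_hausdorff _ _) (cvg_enorm w_cvg)) => /=.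
  by under eq_cvg do rewrite /= w_unit; apply: cvg_cst.
have [phi2 phi2_incr r_cases] :=
  subseq_cvg_or_inv_cvg0 (fun k => ltW (r_gt0 (phi1 k))).
have [phi3 phi3_incr s_cases] :=
  subseq_cvg_or_inv_cvg0 (fun k => s_ge0 (phi1 (phi2 k))).
have phi23_incr := increasing_seq_comp phi2_incr phi3_incr.
have phi_incr := increasing_seq_comp phi1_incr phi23_incr.
have {}w_cvg := cvg_subseq phi23_incr w_cvg.
case: s_cases => [[beta beta_ge0 s_cvg] | [s_gt0 s_inv_cvg]]; last first.
  by left; exists w0 => //; apply: subseq_ker_pcoderiv phi_incr w_cvg s_gt0 s_inv_cvg.
right; case: r_cases => [[alpha alpha_ge0 r_cvg] | [_ r_inv_cvg]].
  right; exists alpha, beta, w0; split => //.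
  exact: subseq_pcoderiv phi_incr w_cvg (cvg_subseq phi3_incr r_cvg) s_cvg.
left; apply: subseq_gpcoderiv phi_incr w_cvg _.
exact: cvg_subseq phi3_incr r_inv_cvg.
Qed.

End asymptotic_regularity.

Theorem theorem5p17 (R : realType) (n m : nat)
  (Phi : 'rV[R]_n -> set 'rV[R]_m) (xb : 'rV[R]_n) (yb : 'rV[R]_m)
  (u : 'rV[R]_n) (gamma : R) :
  closed_graph Phi -> Phi xb yb -> enorm u = 1 -> 1 < gamma ->
  (* A^gamma(u), first part *)
  (forall ys, ker (pcoderiv gamma Phi xb yb u 0) ys -> ys = 0) ->
  (* A^gamma(u), second part *)
  (forall alpha beta : R, 0 <= alpha -> 0 <= beta ->
     (forall xs, gpcoderiv gamma Phi xb yb u 0 0 xs -> Im_coderiv Phi xb yb xs) /\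
     (forall (w : 'rV[R]_m) xs, enorm w = 1 ->
        pcoderiv gamma Phi xb yb u (alpha *: w) (beta *: w) xs ->
        Im_coderiv Phi xb yb xs)) ->
  asymp_regular Phi xb yb u.
Proof.
move=> _ Phi_b _ _ ker0 A_im x y xsk lk xs ys _ x_notin y_ne normal /vcvgE x_cvg _
  /vcvgE xs_cvg /vcvgE d_cvg /vcvgE v0_cvg /vcvgE ys_cvg _ /vcvgE dir_cvg.
have x_neq k : x k != xb by apply: contra_notN (x_notin k) => /eqP ->.
have y_neq k : y k != yb by apply/eqP.
have [[w0 w0_unit /ker0 w00] | [gfrerer | [alpha [beta [w0 []]]]]] :=
  pseudo_coderiv_trichotomy gamma x_neq y_neq normal x_cvg xs_cvg d_cvg v0_cvg
    ys_cvg dir_cvg.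
- by move: w0_unit; rewrite w00 enorm0 => /eqP; rewrite eq_sym oner_eq0.
- exact: (A_im 0 0 (lexx 0) (lexx 0)).1 _ gfrerer.
- move=> alpha_ge0 beta_ge0 w0_unit.
  exact: (A_im _ _ alpha_ge0 beta_ge0).2 _ _ w0_unit.
Qed.
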